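(* Let $p$ be a prime number, let $u \geqslant 1$ and $n \geqslant m \geqslant 1$ be integers, and let $$f(x) = a_{n}x^{n} + a_{n-1}x^{n-1} + \cdots + a_{m}x^{m} + p^{u} \in \mathbb{Z}[x]$$ with $a_n \neq 0$. Suppose that $p \nmid a_{m}$, that $\gcd(u, m) = 1$, and that $$p^{u} > |a_{n}| + |a_{n-1}| + \cdots + |a_{m}|.$$ Then $f(x)$ is irreducible over $\mathbb{Q}$. *)

From mathcomp Require Import all_boot all_order all_algebra.
Set Implicit Arguments. Unset Strict Implicit. Unset Printing Implicit Defensive.
Import Order.TTheory GRing.Theory Num.Theory.
Local Open Scope ring_scope.

Definition fpoly (a : nat -> int) (m n : nat) (p u : nat) : {poly int} :=
  \sum_(m <= i < n.+1) (a i)%:P * 'X^i + ((p ^ u)%N%:Z)%:P.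

(* For |z| <= 1 the terms a_i z^i cannot cancel p^u, so every complex root of
   f lies outside the closed unit disk.  Hence in a factorization f = g h over
   Z neither constant term is a unit: g_0 h_0 = p^u gives v_p(g_0) = s > 0 and
   v_p(h_0) = t > 0 with s + t = u.  Weight the coefficient c_i of a polynomial
   by m v_p(c_i) + u i.  As for Newton polygons, some coefficient of g h has
   weight at most the sum of the minimal weights of g and h, while every
   nonzero coefficient of f has weight at least m u.  Comparing with the
   weights m s, m t of g_0, h_0 and with u j, u (m - j) of coefficients g_j,
   h_(m-j) prime to p (they exist since p does not divide a_m) yields
   m s = u j; as gcd(u, m) = 1, j is 0 or m, so s = 0 or t = 0. *)

From mathcomp Require Import all_boot all_order all_algebra algC.
From mathcomp Require Import zify.

Set Implicit Arguments.
Unset Strict Implicit.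
Unset Printing Implicit Defensive.
Import Order.TTheory GRing.Theory Num.Theory.
Local Open Scope ring_scope.

Lemma coef_fpoly (a : nat -> int) m n p u k :
  (fpoly a m n p u)`_k =
    (if (m <= k <= n)%N then a k else 0) + (if k == 0%N then (p ^ u)%N%:Z else 0).
Proof.
rewrite /fpoly coefD coefC coef_sum; congr (_ + _).
under eq_bigr do rewrite coefCM coefXn mulr_natr mulrb eq_sym.
by rewrite -big_mkcond big_nat1_eq ltnS.
Qed.

Lemma pfactor_dvdz p e (x : int) : prime p -> x != 0 ->
  ((p ^ e)%N%:Z %| x)%Z = (e <= logn p `|x|)%N.
Proof. by move=> p_pr x_neq0; rewrite dvdzE /= pfactor_dvdn // absz_gt0. Qed.

Lemma logn_ndvdz p (x : int) : prime p -> ~~ (p%:Z %| x)%Z -> logn p `|x| = 0%N.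
Proof. by move=> p_pr; rewrite dvdzE -prime_coprime // => /logn_coprime. Qed.

Lemma coprime_balanced_split_trivial (m u s t j : nat) :
    (0 < m)%N -> coprime u m -> (j <= m)%N -> (s + t = u)%N ->
    (m * u <= m * s + u * (m - j))%N -> (m * u <= u * j + m * t)%N ->
  (s == 0%N) || (t == 0%N).
Proof.
move=> m_gt0 cop_um j_le_m st_sum ge_s ge_t.
have u_split : (u * j + u * (m - j) = u * m)%N by rewrite -mulnDr subnKC.
have m_split : (m * s + m * t = m * u)%N by rewrite -mulnDr st_sum.
have ms_eq : (m * s = u * j)%N by lia.
have mt_eq : (m * t = u * (m - j))%N by lia.
have m_dvd_j : (m %| j)%N by rewrite -(@Gauss_dvdr m u) 1?coprime_sym // -ms_eq dvdn_mulr.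
have [j0|j_gt0] := posnP j.
  by move: ms_eq; rewrite j0 muln0 => /eqP; rewrite muln_eq0 gtn_eqF //= => ->.
have j_eq_m : j = m by apply/eqP; rewrite eqn_leq j_le_m dvdn_leq.
by move: mt_eq; rewrite j_eq_m subnn muln0 => /eqP; rewrite muln_eq0 gtn_eqF //= orbC => ->.
Qed.

Lemma exists_root_norm_le1 (C : numClosedFieldType) (h : {poly C}) :
  (1 < size h)%N -> `|h.[0]| <= `|lead_coef h| -> exists2 z, `|z| <= 1 & root h z.
Proof.
move=> h_gt1 h0_le; have [r def_h] := closed_field_poly_normal h.
have lc_neq0 : lead_coef h != 0 by rewrite lead_coef_eq0 -size_poly_gt0 ltnW.
have [/hasP[z rz z_le1]|/hasPn r_gt1] := boolP (has (fun z => `|z| <= 1) r).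
  exists z => //; rewrite /root def_h hornerZ horner_prod mulf_eq0 prodf_seq_eq0.
  by apply/orP; right; apply/hasP; exists z; rewrite //= hornerXsubC subrr.
case: r def_h r_gt1 => [|z r'] def_h r_gt1.
  by move: h_gt1; rewrite def_h big_nil size_scale // size_poly1.
have norm_gt1 w : w \in z :: r' -> 1 < `|w|.
  by move=> rw; rewrite real_ltNge ?normr_real ?real1 // r_gt1.
have r'_ge1 : 1 <= \prod_(w <- r') `|w|.
  rewrite big_seq; apply: (big_ind (fun x => 1 <= x)) => //; first exact: mulr_ege1.
  by move=> w r'w; rewrite ltW // norm_gt1 // in_cons r'w orbT.
have : `|lead_coef h| < `|h.[0]|.
  rewrite {2}def_h hornerZ horner_prod normrM normr_prod ltr_pMr ?normr_gt0 //.
  rewrite big_cons hornerXsubC sub0r normrN.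
  rewrite (lt_le_trans (norm_gt1 z _)) ?mem_head ?ler_peMr //.
  by under eq_bigr do rewrite hornerXsubC sub0r normrN.
by rewrite real_ltNge ?normr_real // h0_le.
Qed.

Lemma irreducible_rat_of_int (q : {poly int}) : (1 < size q)%N ->
    (forall f g, q = f * g -> (1 < size f)%N -> (1 < size g)%N -> False) ->
  irreducible_poly (map_poly (intr : int -> rat) q).
Proof.
move=> q_gt1 q_indecomposable; have q_neq0 : q != 0 by rewrite -size_poly_gt0 ltnW.
split; first by rewrite size_map_poly_id0 ?intr_eq0 ?lead_coef_eq0.
move=> h + /dvdpP_rat_int[f [c c_neq0 def_h] [g def_q]]; rewrite {h}def_h.
have [f_neq0 g_neq0] : f != 0 /\ g != 0.
  by split; apply: contra_neq q_neq0 => eq0; rewrite def_q eq0 ?mul0r ?mulr0.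
rewrite size_scale // size_map_poly_id0 ?intr_eq0 ?lead_coef_eq0 // => f_neq1.
rewrite def_q (eqp_trans (eqp_scale _ _)) //.
have [/eqP/size_poly1P[d d_neq0 ->]|g_neq1] := eqVneq (size g) 1%N.
  by rewrite mulrC mul_polyC map_polyZ /= eqp_sym eqp_scale // intr_eq0.
by case: (q_indecomposable f g def_q); rewrite ltn_neqAle eq_sym ?f_neq1 ?g_neq1 size_poly_gt0.
Qed.

Section WeightedValuation.

Variables (p m u : nat).
Hypotheses (p_pr : prime p) (m_gt0 : (0 < m)%N).

Definition vcoef (h : {poly int}) i := logn p (absz h`_i).

Definition weight (h : {poly int}) i := (m * vcoef h i + u * i)%N.

Definition first_weight_min (h : {poly int}) i :=
  [/\ h`_i != 0, forall j, h`_j != 0 -> (weight h i <= weight h j)%N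
    & forall j, (j < i)%N -> h`_j != 0 -> (weight h i < weight h j)%N].

Lemma exists_first_weight_min h : h != 0 -> exists i, first_weight_min h i.
Proof.
move=> h_neq0.
have coef_lt_size j : h`_j != 0 -> (j < size h)%N.
  by apply: contraR; rewrite -leqNgt => /(nth_default 0) ->.
have exists_weight : exists N,
    [exists j : 'I_(size h), (h`_j != 0) && (weight h j == N)].
  have lt_size : ((size h).-1 < size h)%N by rewrite prednK // size_poly_gt0.
  exists (weight h (size h).-1); apply/existsP; exists (Ordinal lt_size).
  by rewrite eqxx andbT -lead_coefE lead_coef_eq0.
have [N /existsP[j0 /andP[hj0 /eqP wj0]] N_min] := ex_minnP exists_weight.
have N_le j : h`_j != 0 -> (N <= weight h j)%N.
  move=> hj; apply: N_min; apply/existsP.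
  by exists (Ordinal (coef_lt_size j hj)); rewrite /= hj eqxx.
have exists_index : exists i, (h`_i != 0) && (weight h i == N).
  by exists j0; rewrite hj0 wj0 eqxx.
have [i /andP[hi /eqP wi] i_min] := ex_minnP exists_index.
exists i; split=> // [j hj|j lt_ji hj]; rewrite wi ?N_le //.
rewrite ltn_neqAle N_le // andbT; apply: contraTneq lt_ji => wj.
by rewrite -leqNgt i_min // hj wj eqxx.
Qed.

Lemma coef_mul_first_weight_min f g i1 i2 :
    first_weight_min f i1 -> first_weight_min g i2 ->
  ~~ ((p ^ (vcoef f i1 + vcoef g i2).+1)%N%:Z %| (f * g)`_(i1 + i2))%Z.
Proof.
(* Taking the first minimizers makes f_i1 g_i2 the only term of minimal weight
   in (f g)_(i1 + i2): for j < i1 the f-factor is heavier, for j > i1 the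
   g-factor is. *)
move=> [f_i1 f_le f_lt] [g_i2 g_le g_lt].
set E := (vcoef f i1 + vcoef g i2)%N.
have lt_i1 : (i1 < (i1 + i2).+1)%N by rewrite ltnS leq_addr.
rewrite coefM (bigD1 (Ordinal lt_i1)) //= addKn.
set rest := \sum_(j < _ | _) _.
suff rest_dvd : ((p ^ E.+1)%N%:Z %| rest)%Z.
  by rewrite rpredDr // pfactor_dvdz ?mulf_neq0 // abszM lognM ?absz_gt0 // /E ltnn.
apply: rpred_sum => j j_neq_i1.
have [->|f_j] := eqVneq f`_j 0; first by rewrite mul0r dvdz0.
have [->|g_j] := eqVneq g`_(i1 + i2 - j) 0; first by rewrite mulr0 dvdz0.
rewrite pfactor_dvdz ?mulf_neq0 // abszM lognM ?absz_gt0 //.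
rewrite -/(vcoef f j) -/(vcoef g _) -(ltn_pmul2l m_gt0).
have j_le : (j <= i1 + i2)%N by rewrite -ltnS.
have u_split : (u * j + u * (i1 + i2 - j) = u * i1 + u * i2)%N by rewrite -!mulnDr subnKC.
have : (j : nat) != i1 by apply: contra j_neq_i1 => /eqP eq_j; apply/eqP/val_inj.
case: (ltngtP j i1) => // [lt_j_i1|lt_i1_j] _.
  have := f_lt _ lt_j_i1 f_j; have := g_le _ g_j.
  by rewrite /weight /E; lia.
have lt_i2 : (i1 + i2 - j < i2)%N by lia.
have := g_lt _ lt_i2 g_j; have := f_le _ f_j.
by rewrite /weight /E; lia.
Qed.

Lemma exists_weight_mul_le (f g : {poly int}) : f != 0 -> g != 0 ->
  exists2 k, (f * g)`_k != 0 & forall i j, f`_i != 0 -> g`_j != 0 ->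
    (weight (f * g) k <= weight f i + weight g j)%N.
Proof.
move=> f_neq0 g_neq0.
have [i1 f_min] := exists_first_weight_min f_neq0.
have [i2 g_min] := exists_first_weight_min g_neq0.
have := coef_mul_first_weight_min f_min g_min.
case: f_min g_min => [f_i1 f_le _] [g_i2 g_le _] ndvd_fg.
have fg_neq0 : (f * g)`_(i1 + i2) != 0 by apply: contraNneq ndvd_fg => ->; rewrite dvdz0.
exists (i1 + i2)%N => // i j f_i g_j.
have := f_le _ f_i; have := g_le _ g_j.
move: ndvd_fg; rewrite pfactor_dvdz // -/(vcoef _ _) -leqNgt -(leq_pmul2l m_gt0) /weight.
lia.
Qed.

End WeightedValuation.

Section FpolyFactors.

Variables (p u m n : nat) (a : nat -> int).
Hypotheses (p_pr : prime p) (m_gt0 : (0 < m)%N).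
Hypothesis sum_lt : \sum_(m <= i < n.+1) `|a i| < (p ^ u)%N%:Z.

Local Notation F := (fpoly a m n p u).

Lemma fpoly_coef0 : F`_0 = (p ^ u)%N%:Z.
Proof. by rewrite coef_fpoly (leqNgt m) m_gt0 add0r. Qed.

Lemma fpoly_root_norm_gt1 (C : numClosedFieldType) (z : C) :
  root (map_poly intr F) z -> 1 < `|z|.
Proof.
apply: contraLR; rewrite real_ltNge ?normr_real ?real1 // negbK => z_le1.
rewrite /root /fpoly rmorphD rmorph_sum /= map_polyC hornerD horner_sum hornerC /=.
under eq_bigr do rewrite rmorphM /= map_polyC map_polyXn hornerCM hornerXn.
rewrite addrC addr_eq0; apply: contraTneq sum_lt => sum_eq.
have : `|((p ^ u)%N%:Z)%:~R : C| <= \sum_(m <= i < n.+1) (`|a i|)%:~R.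
  rewrite sum_eq normrN; apply: (le_trans (ler_norm_sum _ _ _)).
  apply: ler_sum => i _; rewrite normrM intr_norm normrX ler_piMr //.
  exact: exprn_ile1.
by rewrite -intr_norm -rmorph_sum /= ler_int ger0_norm // -leNgt.
Qed.

Lemma fpoly_factor_vcoef0_gt0 f g :
  F = f * g -> (1 < size f)%N -> (0 < vcoef p f 0)%N.
Proof.
move=> def_F f_gt1.
have f0_dvd : (absz (f`_0)%R %| p ^ u)%N.
  by rewrite -[(p ^ u)%N]/(absz (p ^ u)%N%:Z) -fpoly_coef0 def_F coef0M abszM dvdn_mulr.
have [k _ abs_f0] := dvdn_pfactor _ _ p_pr f0_dvd.
rewrite /vcoef abs_f0 pfactorK // lt0n; apply/negP => /eqP k0.
rewrite k0 in abs_f0.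
pose fC := map_poly (intr : int -> algC) f.
have f_neq0 : f != 0 by rewrite -size_poly_gt0 ltnW.
have fC_gt1 : (1 < size fC)%N by rewrite size_map_poly_id0 // intr_eq0 lead_coef_eq0.
have fC0_le : `|fC.[0]| <= `|lead_coef fC|.
  rewrite horner_coef0 coef_map lead_coef_map_inj //=; last exact: intr_inj.
  rewrite -!intr_norm -!abszE abs_f0 ler_int lez_nat lt0n absz_eq0.
  by rewrite lead_coef_eq0.
have [z z_le1 root_z] := exists_root_norm_le1 fC_gt1 fC0_le.
have : 1 < `|z| by apply: fpoly_root_norm_gt1; rewrite def_F rmorphM rootM root_z.
by rewrite real_ltNge ?normr_real // z_le1.
Qed.

Lemma fpoly_weight_ge k : F`_k != 0 -> (m * u <= weight p m u F k)%N.
Proof.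
rewrite /weight /vcoef coef_fpoly.
have [-> _|k_neq0] := eqVneq k 0%N.
  by rewrite (leqNgt m) m_gt0 add0r /= pfactorK // muln0 addn0.
rewrite addr0; case: ifP => [/andP[m_le_k _] _|_]; last by rewrite eqxx.
by rewrite mulnC (leq_trans _ (leq_addl _ _)) // leq_mul2l m_le_k orbT.
Qed.

Lemma fpoly_factor_weight_ge f g i k : F = f * g -> f`_i != 0 -> g`_k != 0 ->
  (m * u <= weight p m u f i + weight p m u g k)%N.
Proof.
move=> def_F f_i g_k.
have [f_neq0 g_neq0] : f != 0 /\ g != 0.
  by split; [apply: contraNneq f_i | apply: contraNneq g_k] => ->; rewrite coef0.
have [l Fl_neq0 Fl_le] := exists_weight_mul_le u p_pr m_gt0 f_neq0 g_neq0.
rewrite -def_F in Fl_neq0 Fl_le.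
exact: leq_trans (fpoly_weight_ge Fl_neq0) (Fl_le _ _ f_i g_k).
Qed.

Lemma fpoly_indecomposable f g :
    (m <= n)%N -> ~~ (p%:Z %| a m)%Z -> coprime u m ->
  F = f * g -> (1 < size f)%N -> (1 < size g)%N -> False.
Proof.
move=> m_le_n p_ndvd_am cop_um def_F f_gt1 g_gt1.
have s_gt0 := fpoly_factor_vcoef0_gt0 def_F f_gt1.
have t_gt0 : (0 < vcoef p g 0)%N.
  by apply: (@fpoly_factor_vcoef0_gt0 g f) => //; rewrite mulrC.
have f0g0 : f`_0 * g`_0 = (p ^ u)%N%:Z by rewrite -coef0M -def_F fpoly_coef0.
have /andP[f0_neq0 g0_neq0] : (f`_0 != 0) && (g`_0 != 0).
  by rewrite -negb_or -mulf_eq0 f0g0 eqz_nat -lt0n expn_gt0 prime_gt0.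
have st_sum : (vcoef p f 0 + vcoef p g 0 = u)%N.
  by rewrite /vcoef -lognM ?absz_gt0 // -abszM f0g0 pfactorK.
have [j p_ndvd] : exists j : 'I_m.+1, ~~ (p%:Z %| f`_j * g`_(m - j))%Z.
  apply/existsP; apply: contraR p_ndvd_am => /existsPn p_dvd.
  have <- : F`_m = a m by rewrite coef_fpoly leqnn m_le_n gtn_eqF // addr0.
  by rewrite def_F coefM; apply: rpred_sum => i _; have := p_dvd i; rewrite negbK.
have [p_ndvd_fj p_ndvd_gmj] : ~~ (p%:Z %| f`_j)%Z /\ ~~ (p%:Z %| g`_(m - j))%Z.
  by split; apply: contra p_ndvd; [apply: dvdz_mulr|apply: dvdz_mull].
have f_j : f`_j != 0 by apply: contraNneq p_ndvd_fj => ->; rewrite dvdz0.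
have g_mj : g`_(m - j) != 0 by apply: contraNneq p_ndvd_gmj => ->; rewrite dvdz0.
have vf_j : vcoef p f j = 0%N := logn_ndvdz p_pr p_ndvd_fj.
have vg_mj : vcoef p g (m - j) = 0%N := logn_ndvdz p_pr p_ndvd_gmj.
have := fpoly_factor_weight_ge def_F f0_neq0 g_mj.
have := fpoly_factor_weight_ge def_F f_j g0_neq0.
rewrite /weight vf_j vg_mj !muln0 !add0n !addn0 => ge_t ge_s.
have j_le_m : (j <= m)%N by rewrite -ltnS.
have := coprime_balanced_split_trivial m_gt0 cop_um j_le_m st_sum ge_s ge_t.
by rewrite !eqn0Ngt s_gt0 t_gt0.
Qed.

End FpolyFactors.

Theorem theorem1 (p u m n : nat) (a : nat -> int) :
  prime p -> (1 <= u)%N -> (1 <= m)%N -> (m <= n)%N ->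
  a n != 0 ->
  ~~ (p%:Z %| a m)%Z ->
  coprime u m ->
  (\sum_(m <= i < n.+1) `|a i|) < ((p ^ u)%N)%:Z ->
  irreducible_poly (map_poly (intr : int -> rat) (fpoly a m n p u)).
Proof.
move=> p_pr _ m_gt0 m_le_n an_neq0 p_ndvd_am cop_um sum_lt.
apply: irreducible_rat_of_int => [|f g]; last exact: fpoly_indecomposable.
have Fn : (fpoly a m n p u)`_n = a n.
  by rewrite coef_fpoly m_le_n leqnn gtn_eqF ?addr0 // (leq_trans m_gt0).
rewrite (@leq_trans n.+1) // ?ltnS ?(leq_trans m_gt0) //.
by rewrite ltnNge; apply: contra an_neq0 => size_le; rewrite -Fn nth_default.
Qed.
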